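(* Let $n\ge2$ and let $Q$ be the $n\times n$ anti-comonotone checkerboard copula, i.e. $Q_{ij}=\frac1n$ if $i+j=n+1$ and $Q_{ij}=0$ otherwise. Then for every $n\times n$ checkerboard copula $P$ there exist nonnegative real numbers $a_{ij}$ ($i,j=1,\dots,n-1$) such that $$P=Q+\sum_{i=1}^{n-1}\sum_{j=1}^{n-1}a_{ij}T^{ij}.$$
   Context: An $n\times n$ checkerboard copula is a real $n\times n$ matrix with nonnegative entries whose row and column sums all equal $\frac1n$. For $i,j\in\{1,\dots,n-1\}$, $T^{ij}=\mathbf{e}_i\mathbf{e}_j^\top+\mathbf{e}_{i+1}\mathbf{e}_{j+1}^\top-\mathbf{e}_i\mathbf{e}_{j+1}^\top-\mathbf{e}_{i+1}\mathbf{e}_j^\top$, where $\mathbf{e}_k$ is the $k$-th standard unit column vector of $\mathbb{R}^n$. *)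

From mathcomp Require Import all_boot all_order all_algebra.
From mathcomp Require Import reals.
Set Implicit Arguments. Unset Strict Implicit. Unset Printing Implicit Defensive.
Import Order.TTheory GRing.Theory Num.Theory.
Local Open Scope ring_scope.

(* Indices are 0-based: row/column k : 'I_n corresponds to k+1 in the paper. *)

Definition checkerboard_copula (R : realType) (n : nat) (P : 'M[R]_n) : Prop :=
  (forall i j, 0 <= P i j) /\
  (forall i, \sum_(j < n) P i j = n%:R^-1) /\
  (forall j, \sum_(i < n) P i j = n%:R^-1).

(* Anti-comonotone checkerboard copula: Q_{ij} = 1/n iff i + j = n + 1 (1-based),
   i.e. i + j = n - 1 for 0-based indices. *)
Definition anti_comonotone (R : realType) (n : nat) : 'M[R]_n :=
  \matrix_(i < n, j < n) (if (i + j)%N == n.-1 then n%:R^-1 else 0).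

(* T^{ij} for i, j in {1..n-1} (paper), here i, j : 'I_n.-1 (0-based):
   e_i e_j^T + e_{i+1} e_{j+1}^T - e_i e_{j+1}^T - e_{i+1} e_j^T. *)
Definition Tmx (R : realType) (n : nat) (i j : 'I_n.-1) : 'M[R]_n :=
  \matrix_(k < n, l < n)
    ((((k == i :> nat) && (l == j :> nat)) || ((k == i.+1 :> nat) && (l == j.+1 :> nat)))%:R
     - (((k == i :> nat) && (l == j.+1 :> nat)) || ((k == i.+1 :> nat) && (l == j :> nat)))%:R).

From mathcomp Require Import all_boot all_order all_algebra.
From mathcomp Require Import reals.
From mathcomp Require Import ring zify.
Set Implicit Arguments. Unset Strict Implicit. Unset Printing Implicit Defensive.
Import Order.TTheory GRing.Theory Num.Theory.
Local Open Scope ring_scope.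

(* Let D = P - Q, a matrix with zero row and column sums.  With the n x (n-1)
   difference matrix Delta (columns e_i - e_(i+1)) and the prefix-sum matrix S,
   T^(ij) = Delta E_ij Delta^T, and summation by parts gives Delta S D = D
   whenever D has zero column sums; hence D = Delta (S D S^T) Delta^T, i.e. the
   coefficients are the block sums a_ij = sum_(k<=i, l<=j) D_kl.  Zero margins
   also make a_ij the sum of D over the opposite block k > i, l > j, and one of
   the two blocks misses the antidiagonal carrying Q, so there D = P >= 0. *)

Lemma sum_indicator_nat (R : pzSemiRingType) (m k : nat) (x : nat -> R) :
  \sum_(i < m) (i == k :> nat)%:R * x i = (k < m)%:R * x k.
Proof.
elim: m => [|m IH]; first by rewrite big_ord0 mul0r.
rewrite big_ord_recr /= IH ltnS [(k <= m)%N]leq_eqVlt.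
by case: (ltngtP k m) => [_|_|->]; rewrite ?mul0r ?mul1r ?addr0 ?add0r.
Qed.

Lemma sum_indicator (R : pzSemiRingType) (I : finType) (j : I) (F : I -> R) :
  \sum_i (i == j)%:R * F i = F j.
Proof.
rewrite (bigD1 j) //= eqxx mul1r big1 ?addr0 // => i /negbTE ->.
by rewrite mul0r.
Qed.

Section PrefixSums.
Variables (R : comPzRingType) (n : nat).

Definition diff_mx : 'M[R]_(n, n.-1) :=
  \matrix_(k, i) ((k == i :> nat)%:R - (k == i.+1 :> nat)%:R).

Definition prefix_mx : 'M[R]_(n.-1, n) := \matrix_(i, k) (k <= i)%N%:R.

Definition suffix_mx : 'M[R]_(n.-1, n) := \matrix_(i, k) (i < k)%N%:R.

Lemma sum_diff_mx (g : nat -> R) (k : 'I_n) : g 0%N = 0 -> g n = 0 ->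
  \sum_(i < n.-1) diff_mx k i * g i.+1 = g k.+1 - g k.
Proof.
move=> g0 gn; under eq_bigr do rewrite mxE mulrBl [k == _ :> nat]eq_sym.
rewrite sumrB (sum_indicator_nat _ _ (fun i => g i.+1)).
congr (_ - _).
  case: (ltnP k n.-1) => [_|k_last]; first by rewrite mul1r.
  have k_succ : k.+1 = n by have := ltn_ord k; lia.
  by rewrite k_succ gn mulr0.
case: k => [[|k] /= lt_k_n].
  by rewrite g0 big1 // => i _; rewrite mul0r.
under eq_bigr do rewrite eqSS [k == _]eq_sym.
rewrite (sum_indicator_nat _ _ (fun i => g i.+1)).
have lt_k : (k < n.-1)%N by lia.
by rewrite lt_k mul1r.
Qed.

Lemma mul_diff_prefix_mx (m : nat) (D : 'M[R]_(n, m)) :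
  (forall l, \sum_(k < n) D k l = 0) -> diff_mx *m (prefix_mx *m D) = D.
Proof.
move=> col0; apply/matrixP => k l; rewrite mxE.
pose g i := \sum_(k < n) (k < i)%N%:R * D k l.
have prefix_g (i : 'I_n.-1) : (prefix_mx *m D) i l = g i.+1.
  by rewrite mxE; apply: eq_bigr => k' _; rewrite mxE ltnS.
under eq_bigr do rewrite prefix_g.
rewrite sum_diff_mx.
- rewrite /g -sumrB -[RHS](sum_indicator k (D^~ l)); apply: eq_bigr => k' _.
  rewrite -mulrBl ltnS leq_eqVlt val_eqE.
  by case: eqVneq => [->|_]; rewrite ?ltnn ?subr0 ?subrr.
- by rewrite /g /= big1 // => k' _; rewrite mul0r.
- by rewrite /g /= -[RHS](col0 l); apply: eq_bigr => k' _; rewrite ltn_ord mul1r.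
Qed.

Section ZeroMargins.
Variable D : 'M[R]_n.
Hypothesis row0 : forall k, \sum_(l < n) D k l = 0.
Hypothesis col0 : forall l, \sum_(k < n) D k l = 0.

Lemma zero_margins_factor :
  D = diff_mx *m (prefix_mx *m D *m prefix_mx^T) *m diff_mx^T.
Proof.
have col0T l : \sum_(k < n) D^T k l = 0.
  by rewrite -[RHS](row0 l); apply: eq_bigr => k _; rewrite mxE.
rewrite !mulmxA -(mulmxA diff_mx) mul_diff_prefix_mx //.
by rewrite -{1}[D]trmxK -{1}(mul_diff_prefix_mx col0T) !trmx_mul trmxK.
Qed.

Lemma prefix_suffix_conj :
  prefix_mx *m D *m prefix_mx^T = suffix_mx *m D *m suffix_mx^T.
Proof.
have suffixE : suffix_mx = const_mx 1 - prefix_mx.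
  by apply/matrixP => i k; rewrite !mxE ltnNge; case: leqP; rewrite ?subrr ?subr0.
have ones_D : const_mx 1 *m D = 0 :> 'M_(n.-1, n).
  apply/matrixP => i l; rewrite !mxE -[RHS](col0 l).
  by apply: eq_bigr => k _; rewrite mxE mul1r.
have D_ones : D *m (const_mx 1)^T = 0 :> 'M_(n, n.-1).
  apply/matrixP => k j; rewrite !mxE -[RHS](row0 k).
  by apply: eq_bigr => l _; rewrite !mxE mulr1.
rewrite suffixE linearB /= mulmxBl ones_D sub0r mulNmx mulmxBr.
by rewrite -(mulmxA _ D (const_mx 1)^T) D_ones mulmx0 sub0r opprK.
Qed.

End ZeroMargins.

End PrefixSums.

Arguments diff_mx {R n}.
Arguments prefix_mx {R n}.
Arguments suffix_mx {R n}.

Lemma conj_mx_ge0 (R : numDomainType) (p q n : nat)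
    (X : 'M[R]_(p, n)) (Y : 'M[R]_(q, n)) (D : 'M[R]_n) i j :
  (forall k, 0 <= X i k) -> (forall l, 0 <= Y j l) ->
  (forall k l, X i k != 0 -> Y j l != 0 -> 0 <= D k l) ->
  0 <= (X *m D *m Y^T) i j.
Proof.
move=> X_ge0 Y_ge0 D_ge0; rewrite mxE; apply: sumr_ge0 => l _.
rewrite !mxE mulr_suml; apply: sumr_ge0 => k _.
have [->|Xik] := eqVneq (X i k) 0; first by rewrite !mul0r.
have [->|Yjl] := eqVneq (Y j l) 0; first by rewrite mulr0.
by rewrite !mulr_ge0 ?D_ge0.
Qed.

Lemma Tmx_diff_mx (R : realType) (n : nat) (i j : 'I_n.-1) (k l : 'I_n) :
  Tmx R i j k l = diff_mx k i * diff_mx l j.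
Proof.
rewrite !mxE.
have not_both (a b : nat) : ~~ ((a == b) && (a == b.+1)).
  by apply/negP => /andP [/eqP -> ]; rewrite (ltn_eqF (ltnSn b)).
move: (not_both k i) (not_both l j).
by case: (k == i :> nat); case: (k == i.+1 :> nat);
   case: (l == j :> nat); case: (l == j.+1 :> nat) => //= _ _; ring.
Qed.

Lemma sum_scale_Tmx (R : realType) (n : nat) (A : 'M[R]_n.-1) :
  \sum_(i < n.-1) \sum_(j < n.-1) A i j *: Tmx R i j = diff_mx *m A *m diff_mx^T.
Proof.
apply/matrixP => k l; rewrite summxE mxE.
under eq_bigr do rewrite summxE; rewrite exchange_big /=.
apply: eq_bigr => j _; rewrite mxE [diff_mx^T j l]mxE mulr_suml.
by apply: eq_bigr => i _; rewrite [LHS]mxE Tmx_diff_mx mulrCA mulrA.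
Qed.

Section AntiComonotone.
Variables (R : realType) (n : nat).
Local Notation Q := (anti_comonotone R n).

Lemma tr_anti_comonotone : Q^T = Q.
Proof. by apply/matrixP => k l; rewrite !mxE addnC. Qed.

Lemma anti_comonotone_row_sum (k : 'I_n) : \sum_(l < n) Q k l = n%:R^-1.
Proof.
have lt_mirror : (n.-1 - k < n)%N by have := ltn_ord k; lia.
rewrite -[RHS](sum_indicator (Ordinal lt_mirror) (fun=> n%:R^-1)).
apply: eq_bigr => l _; rewrite mxE.
have -> : ((k + l)%N == n.-1) = (l == Ordinal lt_mirror).
  by rewrite -val_eqE /=; apply/eqP/eqP; have := ltn_ord k; lia.
by case: eqP; rewrite ?mul1r ?mul0r.
Qed.

Lemma anti_comonotone_col_sum (l : 'I_n) : \sum_(k < n) Q k l = n%:R^-1.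
Proof.
rewrite -[RHS](anti_comonotone_row_sum l) -{1}tr_anti_comonotone.
by apply: eq_bigr => k _; rewrite mxE.
Qed.

Variable P : 'M[R]_n.
Hypothesis P_copula : checkerboard_copula P.

Lemma copula_sub_anti_margins :
  (forall k, \sum_(l < n) (P - Q) k l = 0) /\ (forall l, \sum_(k < n) (P - Q) k l = 0).
Proof.
have [_ [P_rows P_cols]] := P_copula.
split=> [k|l]; under eq_bigr do rewrite mxE [X in _ + X]mxE; rewrite sumrB.
- by rewrite P_rows anti_comonotone_row_sum subrr.
- by rewrite P_cols anti_comonotone_col_sum subrr.
Qed.

Lemma copula_sub_anti_ge0 (k l : 'I_n) : (k + l != n.-1)%N -> 0 <= (P - Q) k l.
Proof.
have [P_ge0 _] := P_copula.
by rewrite !mxE => /negbTE ->; rewrite subr0.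
Qed.

Lemma copula_sub_anti_conj_ge0 (i j : 'I_n.-1) :
  0 <= (prefix_mx *m (P - Q) *m prefix_mx^T) i j.
Proof.
have [row0 col0] := copula_sub_anti_margins.
case: (ltnP (i + j) n.-1) => ij.
- apply: conj_mx_ge0 => [k|l|k l]; rewrite ?[prefix_mx _ _]mxE ?ler0n //.
  rewrite !pnatr_eq0 !eqb0 !negbK => ki lj.
  by apply: copula_sub_anti_ge0; lia.
- rewrite (prefix_suffix_conj row0 col0).
  apply: conj_mx_ge0 => [k|l|k l]; rewrite ?[suffix_mx _ _]mxE ?ler0n //.
  rewrite !pnatr_eq0 !eqb0 !negbK => ik jl.
  by apply: copula_sub_anti_ge0; lia.
Qed.

End AntiComonotone.

Theorem lemma9 (R : realType) (n : nat) (hn : (2 <= n)%N) (P : 'M[R]_n) :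
  checkerboard_copula P ->
  exists a : 'I_n.-1 -> 'I_n.-1 -> R,
    (forall i j, 0 <= a i j) /\
    P = anti_comonotone R n + \sum_(i < n.-1) \sum_(j < n.-1) a i j *: Tmx R i j.
Proof.
move=> P_copula; have [row0 col0] := copula_sub_anti_margins P_copula.
exists (prefix_mx *m (P - anti_comonotone R n) *m prefix_mx^T); split.
  exact: copula_sub_anti_conj_ge0.
by rewrite sum_scale_Tmx -zero_margins_factor // addrC subrK.
Qed.
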